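(* Let $\pi=(x_1,\dots,x_n)$ be a circular ordering of $X$ and let $\delta=\sum_{S}\lambda_S\delta_S$, the sum over all splits $S$ of $X$ that are circular with respect to $\pi$, with $\lambda_S\ge0$ for all such $S$ and $\lambda_S>0$ for every such split both of whose blocks have at least two elements (a generic circular decomposable metric). Then for every circular ordering $\sigma=(y_1,\dots,y_n)$ of $X$ different from $\pi$ (up to rotation and reversal), \[ \frac12\sum_{k=1}^n\delta(y_k,y_{k+1}) \;>\; \frac12\sum_{k=1}^n\delta(x_k,x_{k+1}). \]
   Context: $X=\{1,\dots,n\}$. A circular ordering is a listing $(x_1,\dots,x_n)$ of $X$ regarded cyclically ($x_{n+1}=x_1$); two listings are identified if they differ by rotation or reversal. A split $S=\{A,B\}$ is a partition of $X$ into two nonempty blocks; its split pseudometric is $\delta_S(x,y)=0$ if $x,y$ lie in the same block and $1$ otherwise. A split is circular with respect to $\pi$ if both of its blocks are contiguous arcs of $\pi$, i.e. it has the form $\{\{x_{i+1},\dots,x_j\},\{x_{j+1},\dots,x_i\}\}$ with indices read cyclically. The quantity $\frac12\sum_k\delta(y_k,y_{k+1})$ is the balanced length of $\delta$ with respect to the circular ordering $\sigma$ (half the length of the traveling salesman tour $\sigma$). *)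

(* X = {1..n} is modelled by 'I_n (elements 0..n-1). *)
From mathcomp Require Import all_boot all_order all_algebra all_fingroup.
Set Implicit Arguments. Unset Strict Implicit. Unset Printing Implicit Defensive.
Import Order.TTheory GRing.Theory Num.Theory.

(* A circular ordering is a listing (x_1,...,x_n) of X, i.e. a bijection
   pi : positions -> X, positions 'I_n read cyclically (successor = ordS). *)

Definition same_circular n (pi sigma : 'S_n) : Prop :=
  exists r : nat,
    (forall i : 'I_n, sigma i = pi (iter r (@ordS n) i)) \/
    (forall i : 'I_n, sigma i = pi (iter r (@ordS n) (rev_ord i))).

Definition is_split n (S : {set {set 'I_n}}) : bool :=
  [exists A : {set 'I_n}, [&& A != set0, A != setT & S == [set A; ~: A]]].

Definition split_pm n (S : {set {set 'I_n}}) (x y : 'I_n) : nat :=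
  if [exists A in S, (x \in A) && (y \in A)] then 0 else 1.

Definition arc n (pi : 'S_n) (i : 'I_n) (k : nat) : {set 'I_n} :=
  [set pi (iter t (@ordS n) i) | t : 'I_n & t < k].

Definition is_arc n (pi : 'S_n) (A : {set 'I_n}) : bool :=
  [exists i : 'I_n, exists k : 'I_n.+1, A == arc pi i k].

Definition circular_split n (pi : 'S_n) (S : {set {set 'I_n}}) : bool :=
  is_split S && [forall A in S, is_arc pi A].

Definition circ_metric (R : pzRingType) n (pi : 'S_n)
    (lambda : {set {set 'I_n}} -> R) (x y : 'I_n) : R :=
  \sum_(S : {set {set 'I_n}} | circular_split pi S) lambda S * (split_pm S x y)%:R.

Definition balanced_length (R : fieldType) n (d : 'I_n -> 'I_n -> R) (sigma : 'S_n) : R :=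
  (\sum_(k : 'I_n) d (sigma k) (sigma (ordS k))) / 2%:R.

(* delta is a nonnegative combination of split pseudometrics, so the length of
   a tour sigma is sum_S lambda_S F_sigma(S), where F_sigma(S) is the number of
   steps of sigma crossing S.  Every tour crosses every split at least twice,
   and pi crosses each of its circular splits at most twice.  If sigma is not
   pi up to rotation and reversal, some pi-consecutive x_i, x_(i+1) are not
   adjacent in sigma (otherwise sigma^-1 o pi would be a rotation or a
   reflection of the cycle), so sigma crosses the circular split
   {x_i, x_(i+1)} | rest at least three times.  For n >= 4 both blocks of this
   split have two elements, so its weight is positive; for n <= 3 there is
   only one circular ordering. *)

From Pilot Require Import Defs.
From mathcomp Require Import all_boot all_order all_algebra all_fingroup.
From mathcomp Require Import zify.
Set Implicit Arguments. Unset Strict Implicit. Unset Printing Implicit Defensive.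
Import Order.TTheory GRing.Theory Num.Theory.
Local Open Scope ring_scope.

Definition tour_crossings n (sigma : 'S_n) (S : {set {set 'I_n}}) : nat :=
  (\sum_(k : 'I_n) split_pm S (sigma k) (sigma (ordS k)))%N.

Lemma tour_length_circ_metric (R : pzRingType) n (pi sigma : 'S_n)
    (lambda : {set {set 'I_n}} -> R) :
  \sum_(k : 'I_n) circ_metric pi lambda (sigma k) (sigma (ordS k)) =
  \sum_(S | circular_split pi S) lambda S * (tour_crossings sigma S)%:R.
Proof.
rewrite /circ_metric exchange_big; apply: eq_bigr => S _.
by rewrite natr_sum mulr_sumr.
Qed.

Lemma split_pm_set2 n (A : {set 'I_n}) x y :
  split_pm [set A; ~: A] x y = ((x \in A) != (y \in A)) :> nat.
Proof.
rewrite /split_pm (_ : [exists B in _, _] = ((x \in A) == (y \in A))).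
  by case: (_ == _).
apply/existsP/idP.
  case=> B /andP [/set2P [] -> /andP []]; first by move=> -> ->.
  by rewrite !inE => /negbTE -> /negbTE ->.
by case: (boolP (x \in A)) => xA /eqP yA; [exists A | exists (~: A)];
  rewrite !inE -?yA ?xA ?eqxx ?orbT.
Qed.

Lemma is_split_set2 n (S : {set {set 'I_n}}) : is_split S ->
  exists2 A, A != set0 /\ A != setT & S = [set A; ~: A].
Proof. by case/existsP => A /and3P [A_neq0 A_neqT /eqP ->]; exists A. Qed.

Section CircularTours.
Variable m : nat.
Local Notation N := m.+1.
Implicit Types (i p q : 'I_N) (g : 'I_N -> bool) (pi sigma : 'S_N).

Lemma ordSE i : ordS i = i + Zp1.
Proof. by apply: val_inj => /=; rewrite modnDmr addn1. Qed.

Lemma inZpS t : inZp t.+1 = inZp t + Zp1 :> 'I_N.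
Proof. by apply: val_inj => /=; rewrite modnDm addn1. Qed.

Lemma inZp0 : inZp 0 = 0 :> 'I_N.
Proof. by apply: val_inj; rewrite /= mod0n. Qed.

Lemma iter_ordS t i : iter t (@ordS N) i = i + inZp t.
Proof.
elim: t => [|t IH]; first by rewrite inZp0 addr0.
by rewrite iterS IH ordSE inZpS addrA.
Qed.

Lemma addr_eql (x y : 'I_N) : (x + y == x) = (y == 0).
Proof. by rewrite -{2}[x]addr0 (inj_eq (addrI x)). Qed.

Lemma Zp1_neq0 : (1 < N)%N -> Zp1 != 0 :> 'I_N.
Proof. by move=> lt1N; rewrite -(inj_eq val_inj) /= modn_small. Qed.

Lemma Zp1_mulrn k : Zp1 *+ k = inZp k :> 'I_N.
Proof. by elim: k => [|k IH]; rewrite ?inZp0 // mulrSr IH inZpS. Qed.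

Lemma rev_ordE i : rev_ord i = - (i + Zp1).
Proof.
apply/eqP; rewrite -addr_eq0; apply/eqP/val_inj => /=.
rewrite modnDmr addnA modnDmr (_ : N - i.+1 + i + 1 = N)%N ?modnn //.
by have := ltn_ord i; lia.
Qed.

Lemma addr_val_sub p q : q + inZp (val (p - q)) = p.
Proof. by rewrite valZpK addrC subrK. Qed.

Lemma mem_arc pi i p k : (k <= N)%N ->
  (pi p \in Defs.arc pi i k) = (val (p - i)%R < k)%N.
Proof.
move=> lekN; apply/imsetP/idP => [[t] | ltk].
  rewrite inE => ltk /perm_inj ->.
  by rewrite iter_ordS addrC addKr /= modn_small.
exists (Ordinal (leq_trans ltk lekN)); first by rewrite inE.
by rewrite iter_ordS addr_val_sub.
Qed.

Lemma arc2E pi i : (1 < N)%N -> Defs.arc pi i 2 = [set pi i; pi (i + Zp1)].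
Proof.
move=> lt1N; apply/setP => x; rewrite -(permKV pi x) mem_arc // !inE.
rewrite !(inj_eq (@perm_inj _ pi)) [i + _]addrC -subr_eq -subr_eq0.
move: (_ - i) => z; rewrite -!(inj_eq val_inj) /= (modn_small lt1N).
by case: (val z) => [|[]].
Qed.

Lemma setC_arc pi i k : (0 < k < N)%N ->
  ~: Defs.arc pi i k = Defs.arc pi (i + inZp k) (N - k).
Proof.
move=> /andP [k_gt0 ltkN]; apply/setP => x.
rewrite -(permKV pi x) inE (mem_arc _ _ _ (ltnW ltkN)) mem_arc ?leq_subr // opprD addrA.
move: (_ - i) => z; rewrite /= (modn_small ltkN) modnDmr.
have := ltn_ord z; case: (leqP k z) => lekz ltzN.
  by rewrite (_ : z + (N - k) = z - k + N)%N ?modnDr ?modn_small; lia.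
by rewrite modn_small; lia.
Qed.

Lemma is_arc_arc pi i k : (k <= N)%N -> is_arc pi (Defs.arc pi i k).
Proof.
by move=> lekN; apply/existsP; exists i; apply/existsP; exists (inord k); rewrite inordK.
Qed.

Definition crossings g : nat := #|[pred k | g k != g (ordS k)]|.

Lemma exists_crossing_out g x y : g x -> ~~ g y -> exists k, g k && ~~ g (ordS k).
Proof.
move=> gx ngy; case: (pickP (fun k => g k && ~~ g (ordS k))) => [k gk | none].
  by exists k.
have g_iter t : g (iter t (@ordS N) x).
  by elim: t => //= t IH; move: (none (iter t (@ordS N) x)); rewrite IH => /negbFE.
by move: (g_iter (val (y - x))); rewrite iter_ordS addr_val_sub (negbTE ngy).
Qed.

Lemma crossings_ge2 g x y : g x -> ~~ g y -> (2 <= crossings g)%N.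
Proof.
move=> gx ngy.
have [k1 /andP [g1 ng1]] := exists_crossing_out gx ngy.
have [k2 /andP [ng2 g2]] := exists_crossing_out (g := predC g) ngy (introT negPn gx).
apply/card_gt1P; exists k1, k2; rewrite !inE g1 (negbTE ng1) (negbTE ng2) (negbNE g2).
by split=> //; apply: contraNneq ng2 => <-.
Qed.

Lemma crossings_arc_le2 pi i k : (k <= N)%N ->
  (crossings (fun p => pi p \in Defs.arc pi i k) <= 2)%N.
Proof.
move=> lekN; apply: (@leq_trans #|[set i + inZp k.-1; i + inZp m]|); last first.
  by rewrite cards2; case: (_ != _).
apply/subset_leq_card/subsetP => p; rewrite !inE !mem_arc // ordSE.
rewrite -[p](subrK i) addrK [_ + Zp1]addrAC addrK [_ + i]addrC !(inj_eq (addrI i)).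
case: (p - i) => x ltxN; rewrite -!(inj_eq val_inj) /= modnDmr addn1.
rewrite [(m %% N)%N]modn_small // [(k.-1 %% N)%N]modn_small; last by lia.
case: (ltnP x.+1 N) => [/modn_small -> | lex1N]; first by lia.
by rewrite (_ : x = m) ?eqxx ?orbT //; lia.
Qed.

Definition adjacent p q : Prop := q - p = Zp1 \/ q - p = - Zp1.

Lemma crossings_pair_gt2 p d : d != 0 -> d != Zp1 -> d != - Zp1 ->
  (2 < crossings (fun k => (k == p) || (k == p + d)%R))%N.
Proof.
move=> d_neq0 d_neq1 d_neqN1.
have Zp1_nz : Zp1 != 0 :> 'I_N.
  apply: Zp1_neq0; move: d_neq0; rewrite -(inj_eq val_inj) /= -lt0n.
  by move/leq_ltn_trans; apply.
apply/card_gt2P; exists (p - Zp1), p, (p + d); rewrite !inE !ordSE subrK -!addrA.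
rewrite eqxx ![p == _]eq_sym !addr_eql !(inj_eq (addrI p)) addr_eql addr_eq0 oppr_eq0.
rewrite !eqxx ![_ == d]eq_sym (negbTE Zp1_nz) (negbTE d_neq0) (negbTE d_neq1).
by rewrite (negbTE d_neqN1).
Qed.

Lemma adjacent_of_crossings_pair_le2 p q : p != q ->
  (crossings (fun k => (k == p) || (k == q)) <= 2)%N -> adjacent p q.
Proof.
rewrite /adjacent leqNgt => neq_pq /negP crossings_le2.
have [-> | neq1] := eqVneq (q - p) Zp1; first by left.
have [-> | neqN1] := eqVneq (q - p) (- Zp1); first by right.
case: crossings_le2; rewrite -[q](subrK p) addrC.
by apply: crossings_pair_gt2; rewrite // subr_eq0 eq_sym.
Qed.

Lemma adjacent_small p q : (N <= 3)%N -> p != q -> adjacent p q.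
Proof.
rewrite /adjacent => leN3 neq_pq.
have: q - p != 0 by rewrite subr_eq0 eq_sym.
case: (q - p) => x ltxN; rewrite -(inj_eq val_inj) /= => x_neq0.
have m_gt0 : (0 < m)%N by lia.
have [x1 | xm] : x = 1%N \/ x = m by lia.
  by left; apply: val_inj; rewrite /= x1 modn_small.
by right; apply: val_inj; rewrite /= xm modn_small // modn_small //; lia.
Qed.

Lemma rotation_or_reflection (f : 'I_N -> 'I_N) : injective f ->
  (forall i, adjacent (f i) (f (i + Zp1))) ->
  (forall x, f x = f 0 + x) \/ (forall x, f x = f 0 - x).
Proof.
move=> f_inj f_adj; pose step i := f (i + Zp1) - f i.
(* Two opposite consecutive steps revisit a value of f, which injectivity
   only allows when N <= 2. *)
have step_cancel i : step (i + Zp1) = - step i -> Zp1 = - Zp1 :> 'I_N.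
  rewrite /step => cancel; have : f (i + Zp1 + Zp1) = f i.
    by rewrite -(subrK (f (i + Zp1)) (f (i + Zp1 + Zp1))) cancel opprB subrK.
  by move/f_inj/eqP; rewrite -addrA addr_eql addr_eq0 => /eqP.
have step_const i : step (i + Zp1) = step i.
  have := step_cancel i; rewrite /step.
  by case: (f_adj i) (f_adj (i + Zp1)) => -> [] -> //; rewrite ?opprK => /(_ erefl) e //;
    exact/esym.
have step_at t : step (inZp t) = step 0.
  by elim: t => [|t IH]; rewrite ?inZp0 // inZpS step_const.
have f_at t : f (inZp t) = f 0 + step 0 *+ t.
  elim: t => [|t IH]; first by rewrite inZp0 mulr0n addr0.
  have -> : f (inZp t.+1) = step (inZp t) + f (inZp t) by rewrite /step subrK inZpS.
  by rewrite step_at IH mulrS addrCA.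
case: (f_adj 0) => step0; [left | right] => x;
  by rewrite -[x in f x]valZpK f_at /step step0 ?mulNrn Zp1_mulrn valZpK.
Qed.

Lemma same_circular_of_adjacent pi sigma :
  (forall i, adjacent ((sigma^-1)%g (pi i)) ((sigma^-1)%g (pi (i + Zp1)))) ->
  same_circular pi sigma.
Proof.
move=> adj; have f_inj : injective (fun i => (sigma^-1)%g (pi i)).
  by move=> a b /perm_inj /perm_inj.
have /= [] := rotation_or_reflection f_inj adj; set c := (sigma^-1)%g (pi 0) => fE.
  exists (val (- c)); left => j; apply: (@perm_inj _ (sigma^-1)%g).
  by rewrite permK iter_ordS valZpK fE addrC subrK.
exists (val (c + Zp1)); right => j; apply: (@perm_inj _ (sigma^-1)%g).
by rewrite permK iter_ordS valZpK rev_ordE fE opprD opprK addrCA opprD addNKr addrK.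
Qed.

Lemma tour_crossings_set2 sigma A :
  tour_crossings sigma [set A; ~: A] = crossings (fun k => sigma k \in A).
Proof.
rewrite /tour_crossings /crossings -sum1_card [in RHS]big_mkcond /=.
by apply: eq_bigr => k _; rewrite split_pm_set2 inE; case: (_ != _).
Qed.

Lemma tour_crossings_split_ge2 sigma S : is_split S -> (2 <= tour_crossings sigma S)%N.
Proof.
case/is_split_set2 => A [/set0Pn [x xA]].
rewrite eqEsubset subsetT => /subsetPn [y _ yA] ->.
by rewrite tour_crossings_set2 (crossings_ge2 (x := (sigma^-1)%g x) (y := (sigma^-1)%g y))
  ?permKV.
Qed.

Lemma tour_crossings_circular_le2 pi S : circular_split pi S -> (tour_crossings pi S <= 2)%N.
Proof.
case/andP => /is_split_set2 [A _ ->] /forall_inP /(_ A).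
rewrite !inE eqxx => /(_ isT) /existsP [i /existsP [k /eqP ->]].
by rewrite tour_crossings_set2 crossings_arc_le2 // -ltnS.
Qed.

Definition arc2_split pi i := [set Defs.arc pi i 2; ~: Defs.arc pi i 2].

Lemma card_arc2 pi i : (1 < N)%N -> #|Defs.arc pi i 2| = 2.
Proof.
move=> lt1N; rewrite arc2E // cards2 (inj_eq (@perm_inj _ pi)) eq_sym addr_eql.
by rewrite Zp1_neq0.
Qed.

Lemma circular_split_arc2 pi i : (3 < N)%N ->
  circular_split pi (arc2_split pi i) && [forall A in arc2_split pi i, 1 < #|A|]%N.
Proof.
move=> lt3N; have card2 := card_arc2 pi i (ltnW (ltnW lt3N)).
have cardC : #|~: Defs.arc pi i 2| = (N - 2)%N by rewrite cardsCs setCK card_ord card2.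
rewrite /circular_split -andbA; apply/and3P; split.
- apply/existsP; exists (Defs.arc pi i 2); rewrite eqxx andbT.
  apply/andP; split; apply: contra_eqN card2 => /eqP ->; rewrite ?cards0 //.
  by rewrite cardsT card_ord; lia.
- apply/forall_inP => A /set2P [] ->; first by apply: is_arc_arc; lia.
  by rewrite setC_arc; [apply: is_arc_arc; rewrite leq_subr | lia].
- by apply/forall_inP => A /set2P [] ->; rewrite ?card2 ?cardC //; lia.
Qed.

Lemma tour_crossings_arc2 pi sigma i : (1 < N)%N ->
  tour_crossings sigma (arc2_split pi i) =
  crossings (fun k => (k == (sigma^-1)%g (pi i)) || (k == (sigma^-1)%g (pi (i + Zp1)))).
Proof.
move=> lt1N; rewrite tour_crossings_set2 arc2E //.
by apply: eq_card => k; rewrite !inE !(canF_eq (permK sigma)).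
Qed.

Lemma exists_split_crossed_thrice pi sigma : ~ same_circular pi sigma ->
  exists S, [&& circular_split pi S, [forall A in S, 1 < #|A|] & 2 < tour_crossings sigma S]%N.
Proof.
move=> not_same.
case: (pickP (fun S => [&& circular_split pi S, [forall A in S, 1 < #|A|]
    & 2 < tour_crossings sigma S]%N)) => [S crossed_thrice | none]; first by exists S.
case: not_same; apply: same_circular_of_adjacent => i.
have [Zp1_0 | Zp1_nz] := eqVneq (Zp1 : 'I_N) 0.
  by left; rewrite Zp1_0 addr0 subrr.
have neq : (sigma^-1)%g (pi i) != (sigma^-1)%g (pi (i + Zp1)).
  by rewrite !(inj_eq (@perm_inj _ _)) eq_sym addr_eql.
have [leN3 | lt3N] := leqP N 3; first exact: adjacent_small.
apply: adjacent_of_crossings_pair_le2 => //; rewrite -tour_crossings_arc2; last by lia.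
have /andP [circ big] := circular_split_arc2 pi i lt3N.
by have := none (arc2_split pi i); rewrite /= circ big /= ltnNge => /negbFE.
Qed.
End CircularTours.

Theorem mainTheorem13 (R : realFieldType) (n : nat) (pi : 'S_n)
    (lambda : {set {set 'I_n}} -> R)
    (hnneg : forall S, circular_split pi S -> 0 <= lambda S)
    (hpos : forall S, circular_split pi S ->
        (forall A, A \in S -> (2 <= #|A|)%N) -> 0 < lambda S)
    (sigma : 'S_n) (hsig : ~ same_circular pi sigma) :
  balanced_length (circ_metric pi lambda) pi <
  balanced_length (circ_metric pi lambda) sigma.
Proof.
case: n pi lambda hnneg hpos sigma hsig => [|m] pi lambda hnneg hpos sigma hsig.
  by case: hsig; exists 0%N; left; case.
have [S0 /and3P [circS0 bigS0 gt2S0]] := exists_split_crossed_thrice hsig.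
rewrite /balanced_length ltr_pM2r ?invr_gt0 ?ltr0n // !tour_length_circ_metric.
rewrite (bigD1 S0) // [X in _ < X](bigD1 S0) //=.
apply: ltr_leD.
  rewrite ltr_pM2l ?ltr_nat.
    exact: leq_ltn_trans (tour_crossings_circular_le2 circS0) gt2S0.
  by apply: hpos => // A /(forall_inP bigS0).
apply: ler_sum => S /andP [circS _]; apply: ler_wpM2l; first exact: hnneg.
rewrite ler_nat (leq_trans (tour_crossings_circular_le2 circS)) //.
by apply: tour_crossings_split_ge2; case/andP: circS.
Qed.
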